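(* Let $\gamma$ be a positive integer and let $$G=\Bigl\langle a,b\,\Bigm|\, a^{2^{\gamma+1}}=b^{2^{\gamma+1}}=[a,b]^{2^{\gamma}}=[a,b,a]=[a,b,b]=e,\ a^{2^{\gamma}}=b^{2^{\gamma}}=[a,b]^{2^{\gamma-1}}\Bigr\rangle.$$ Then $G$ is not capable.
   Context: A group $G$ is called capable if there exists a group $K$ such that $K/Z(K)\cong G$. Commutators are $[x,y]=x^{-1}y^{-1}xy$, left-normed: $[x,y,z]=[[x,y],z]$. *)

(* abstract (possibly infinite) groups, since capability
   quantifies over arbitrary groups K. *)
From Stdlib Require Import Arith.

Record group : Type := Group {
  carrier :> Type;
  gmul : carrier -> carrier -> carrier;
  ginv : carrier -> carrier;
  gone : carrier;
  gmulA : forall x y z, gmul x (gmul y z) = gmul (gmul x y) z;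
  gmul1l : forall x, gmul gone x = x;
  gmul1r : forall x, gmul x gone = x;
  gmulVl : forall x, gmul (ginv x) x = gone;
  gmulVr : forall x, gmul x (ginv x) = gone
}.

Arguments gmul {g}.
Arguments ginv {g}.
Arguments gone {g}.

Fixpoint gpow {G : group} (x : G) (n : nat) : G :=
  match n with
  | O => gone
  | S m => gmul x (gpow x m)
  end.

Definition comm {G : group} (x y : G) : G :=
  gmul (gmul (gmul (ginv x) (ginv y)) x) y.

Definition is_hom {G H : group} (f : G -> H) : Prop :=
  forall x y : G, f (gmul x y) = gmul (f x) (f y).

Definition central {K : group} (k : K) : Prop :=
  forall x : K, gmul k x = gmul x k.

(* G is capable: there is a group K with K/Z(K) isomorphic to G, i.e. a
   surjective homomorphism K -> G whose kernel is exactly Z(K). *)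
Definition capable (G : group) : Prop :=
  exists (K : group) (f : K -> G),
    is_hom f /\ (forall g : G, exists k : K, f k = g) /\
    (forall k : K, f k = gone <-> central k).

Definition rels (gam : nat) {H : group} (x y : H) : Prop :=
  gpow x (2 ^ (gam + 1)) = gone /\
  gpow y (2 ^ (gam + 1)) = gone /\
  gpow (comm x y) (2 ^ gam) = gone /\
  comm (comm x y) x = gone /\
  comm (comm x y) y = gone /\
  gpow x (2 ^ gam) = gpow y (2 ^ gam) /\
  gpow y (2 ^ gam) = gpow (comm x y) (2 ^ (gam - 1)).

Definition generates {G : group} (a b : G) : Prop :=
  forall P : G -> Prop,
    P gone -> P a -> P b ->
    (forall x y, P x -> P y -> P (gmul x y)) ->
    (forall x, P x -> P (ginv x)) ->
    forall g, P g.

(* (G, a, b) is the group presented by <a, b | rels gam>: a, b generate G,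
   satisfy the relations, and G has the universal property of the
   presentation (together with generation, the induced hom is unique). *)
Definition presents (gam : nat) (G : group) (a b : G) : Prop :=
  generates a b /\ rels gam a b /\
  forall (H : group) (x y : H), rels gam x y ->
    exists f : G -> H, is_hom f /\ f a = x /\ f b = y.

(** Let n = 2^gam. In K with K/Z(K) = G, choose lifts x, y of a, b. Since
    f(x^n) = a^n = b^n = f(y^n), x^n and y^n differ by a central factor, so x^n commutes
    with y as well as with x; as every element of K is a word in x, y times a central
    element, x^n is central and a^n = 1. This contradicts a^n <> 1 in a quotient of the
    integer Heisenberg group that satisfies the defining relations. *)

From Stdlib Require Import ZArith Lia Eqdep_dec.

Lemma gmul_cancel_l (G : group) (a b c : G) : gmul a b = gmul a c -> b = c.
Proof.
  intros E.
  rewrite <- (gmul1l G b), <- (gmul1l G c), <- (gmulVl G a), <- !gmulA, E.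
  reflexivity.
Qed.

Lemma inv_unique (G : group) (u v : G) : gmul u v = gone -> u = ginv v.
Proof.
  intros E. rewrite <- (gmul1r G u), <- (gmulVr G v), gmulA, E, gmul1l.
  reflexivity.
Qed.

Section Homomorphisms.
Variables (G H : group) (f : G -> H).
Hypothesis f_hom : is_hom f.

Lemma hom_one : f gone = gone.
Proof.
  apply (gmul_cancel_l H (f gone)). rewrite <- f_hom, !gmul1r. reflexivity.
Qed.

Lemma hom_inv (x : G) : f (ginv x) = ginv (f x).
Proof. apply inv_unique. rewrite <- f_hom, gmulVl. exact hom_one. Qed.

Lemma hom_pow (x : G) (m : nat) : f (gpow x m) = gpow (f x) m.
Proof.
  induction m as [|m IHm]; simpl; [exact hom_one|].
  rewrite f_hom, IHm. reflexivity.
Qed.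

Lemma hom_comm (x y : G) : f (comm x y) = comm (f x) (f y).
Proof. unfold comm. rewrite !f_hom, !hom_inv. reflexivity. Qed.

End Homomorphisms.

Arguments hom_one {G H f}.
Arguments hom_inv {G H f}.
Arguments hom_pow {G H f}.
Arguments hom_comm {G H f}.

Definition commute {G : group} (x y : G) : Prop := gmul x y = gmul y x.

Section Commute.
Variable G : group.
Implicit Types x y z : G.

Lemma commute_sym x y : commute x y -> commute y x.
Proof. unfold commute. congruence. Qed.

Lemma commute_one x : commute x gone.
Proof. unfold commute. rewrite gmul1l, gmul1r. reflexivity. Qed.

Lemma commute_mul x y z : commute x y -> commute x z -> commute x (gmul y z).
Proof.
  unfold commute. intros Ey Ez.
  rewrite gmulA, Ey, <- gmulA, Ez, gmulA. reflexivity.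
Qed.

Lemma commute_inv x y : commute x y -> commute x (ginv y).
Proof.
  unfold commute. intros E.
  transitivity (gmul (ginv y) (gmul (gmul y x) (ginv y))).
  - rewrite !gmulA, gmulVl, gmul1l. reflexivity.
  - rewrite <- E, <- !gmulA, gmulVr, gmul1r. reflexivity.
Qed.

Lemma commute_pow x m : commute (gpow x m) x.
Proof.
  unfold commute. induction m as [|m IHm]; simpl.
  - rewrite gmul1l, gmul1r. reflexivity.
  - rewrite <- gmulA, IHm. reflexivity.
Qed.

End Commute.

Section CentralQuotient.
Variables (K G : group) (f : K -> G).
Hypotheses (f_hom : is_hom f) (f_surj : forall g : G, exists k : K, f k = g)
  (f_ker : forall k : K, f k = gone <-> central k).

Lemma fiber_central (k k' : K) : f k = f k' -> central (gmul (ginv k') k).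
Proof.
  intros E. apply f_ker. rewrite f_hom, (hom_inv f_hom), E. apply gmulVl.
Qed.

Lemma commute_fiber (X k k' : K) : commute X k' -> f k = f k' -> commute X k.
Proof.
  intros Hk' E.
  replace k with (gmul k' (gmul (ginv k') k))
    by (rewrite gmulA, gmulVr, gmul1l; reflexivity).
  apply commute_mul; [exact Hk'|].
  apply commute_sym, (fiber_central k k' E).
Qed.

Lemma central_of_commute_lifts (a b : G) (x y X : K) :
  generates a b -> f x = a -> f y = b -> commute X x -> commute X y -> central X.
Proof.
  intros Hgen Hx Hy HXx HXy.
  assert (Hlifts : forall g k, f k = g -> commute X k).
  { apply (Hgen (fun g => forall k, f k = g -> commute X k)).
    - intros k Hk. apply (commute_fiber X k gone); [apply commute_one|].
      rewrite Hk, (hom_one f_hom). reflexivity.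
    - intros k Hk. apply (commute_fiber X k x); congruence.
    - intros k Hk. apply (commute_fiber X k y); congruence.
    - intros g1 g2 IH1 IH2 k Hk.
      destruct (f_surj g1) as [k1 E1], (f_surj g2) as [k2 E2].
      apply (commute_fiber X k (gmul k1 k2)); [apply commute_mul; auto|].
      rewrite f_hom. congruence.
    - intros g IH k Hk. destruct (f_surj g) as [k1 E1].
      apply (commute_fiber X k (ginv k1)); [apply commute_inv; auto|].
      rewrite (hom_inv f_hom). congruence. }
  intros k. exact (Hlifts (f k) k eq_refl).
Qed.

Lemma generated_pow_eq_trivial (a b : G) (m n : nat) :
  generates a b -> gpow a m = gpow b n -> gpow a m = gone.
Proof.
  intros Hgen E.
  destruct (f_surj a) as [x Hx], (f_surj b) as [y Hy].
  assert (Hfiber : f (gpow x m) = f (gpow y n))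
    by (rewrite !(hom_pow f_hom), Hx, Hy; exact E).
  assert (Hcentral : central (gpow x m)).
  { apply (central_of_commute_lifts a b x y); auto.
    - apply commute_pow.
    - apply commute_sym, (commute_fiber y _ (gpow y n)); [|exact Hfiber].
      apply commute_sym, commute_pow. }
  rewrite <- Hx, <- (hom_pow f_hom). apply f_ker, Hcentral.
Qed.

End CentralQuotient.

Lemma capable_generated_pow_eq (G : group) (a b : G) (m n : nat) :
  capable G -> generates a b -> gpow a m = gpow b n -> gpow a m = gone.
Proof.
  intros (K & f & f_hom & f_surj & f_ker).
  exact (generated_pow_eq_trivial K G f f_hom f_surj f_ker a b m n).
Qed.

(* A quotient of H, represented by a normal-form function so that the carrier is a subtype
   with Leibniz equality; decidability of equality in H makes the proofs of [nf x = x]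
   unique. *)
Section NormalFormQuotient.
Variables (H : group) (nf : H -> H).
Hypothesis H_eq_dec : forall x y : H, {x = y} + {x <> y}.
Hypotheses (nf_idem : forall x, nf (nf x) = nf x)
  (nf_mul_l : forall x y, nf (gmul (nf x) y) = nf (gmul x y))
  (nf_mul_r : forall x y, nf (gmul x (nf y)) = nf (gmul x y))
  (nf_inv : forall x, nf (ginv (nf x)) = nf (ginv x)).

Definition normal_form := {x : H | nf x = x}.

Lemma normal_form_eq (u v : normal_form) : proj1_sig u = proj1_sig v -> u = v.
Proof.
  destruct u as [x Hx], v as [y Hy]; simpl. intros <-.
  f_equal. apply UIP_dec, H_eq_dec.
Qed.

Definition nf_class (x : H) : normal_form := exist _ (nf x) (nf_idem x).

Lemma nf_class_val (u : normal_form) : nf_class (proj1_sig u) = u.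
Proof. apply normal_form_eq. exact (proj2_sig u). Qed.

Definition nf_mul (u v : normal_form) : normal_form :=
  nf_class (gmul (proj1_sig u) (proj1_sig v)).
Definition nf_ginv (u : normal_form) : normal_form := nf_class (ginv (proj1_sig u)).

Lemma nf_class_mul (x y : H) : nf_class (gmul x y) = nf_mul (nf_class x) (nf_class y).
Proof. apply normal_form_eq. simpl. rewrite nf_mul_l, nf_mul_r. reflexivity. Qed.

Lemma nf_class_inv (x : H) : nf_class (ginv x) = nf_ginv (nf_class x).
Proof. apply normal_form_eq. simpl. rewrite nf_inv. reflexivity. Qed.

Definition quotient_group : group.
Proof.
  refine {| carrier := normal_form; gmul := nf_mul; ginv := nf_ginv;
            gone := nf_class gone |}.
  - intros u v w.
    rewrite <- (nf_class_val u), <- (nf_class_val v), <- (nf_class_val w).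
    rewrite <- !nf_class_mul, gmulA. reflexivity.
  - intros u. rewrite <- (nf_class_val u), <- nf_class_mul, gmul1l. reflexivity.
  - intros u. rewrite <- (nf_class_val u), <- nf_class_mul, gmul1r. reflexivity.
  - intros u. rewrite <- (nf_class_val u), <- nf_class_inv, <- nf_class_mul, gmulVl.
    reflexivity.
  - intros u. rewrite <- (nf_class_val u), <- nf_class_inv, <- nf_class_mul, gmulVr.
    reflexivity.
Defined.

Lemma nf_class_hom : @is_hom H quotient_group nf_class.
Proof. exact nf_class_mul. Qed.

End NormalFormQuotient.

Open Scope Z_scope.

(* The triple (i, j, k) stands for y^j x^i [x, y]^k. *)
Definition heis_mul (p q : Z * Z * Z) : Z * Z * Z :=
  let '(i, j, k) := p in let '(i', j', k') := q in (i + i', j + j', k + k' + i * j').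

Definition heis_inv (p : Z * Z * Z) : Z * Z * Z :=
  let '(i, j, k) := p in (- i, - j, - k + i * j).

Ltac heis_ring :=
  repeat match goal with p : (Z * Z * Z)%type |- _ => destruct p as [[? ?] ?] end;
  simpl; apply pair_equal_spec; split; [apply pair_equal_spec; split|]; ring.

Definition heisenberg : group.
Proof.
  refine {| carrier := Z * Z * Z; gmul := heis_mul; ginv := heis_inv; gone := (0, 0, 0) |};
    intros; heis_ring.
Defined.

Lemma heis_pow_xz (i k : Z) (m : nat) :
  gpow (G := heisenberg) (i, 0, k) m = (Z.of_nat m * i, 0, Z.of_nat m * k).
Proof.
  induction m as [|m IHm]; simpl gpow; [reflexivity|].
  rewrite IHm, Nat2Z.inj_succ. heis_ring.
Qed.

Lemma heis_pow_yz (j k : Z) (m : nat) :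
  gpow (G := heisenberg) (0, j, k) m = (0, Z.of_nat m * j, Z.of_nat m * k).
Proof.
  induction m as [|m IHm]; simpl gpow; [reflexivity|].
  rewrite IHm, Nat2Z.inj_succ. heis_ring.
Qed.

Section HeisenbergQuotient.
Variable h : Z.
Hypothesis h_pos : 0 < h.

(* [heis_congr p q] iff q = p n for some n in the normal subgroup generated by
   x^(2h) [x, y]^(-h), y^(2h) [x, y]^(-h) and [x, y]^(2h).  For h = 2^(gam-1) the quotient
   satisfies the defining relations of G, while x^(2h) = [x, y]^h is nontrivial in it. *)
Definition heis_congr (p q : Z * Z * Z) : Prop :=
  let '(i, j, k) := p in let '(i', j', k') := q in
  exists P Q T, i' = i + P * (2 * h) /\ j' = j + Q * (2 * h) /\
                k' = k - (P + Q) * h + T * (2 * h).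

Definition heis_nf (p : Z * Z * Z) : Z * Z * Z :=
  let '(i, j, k) := p in
  (i mod (2 * h), j mod (2 * h), (k + (i / (2 * h) + j / (2 * h)) * h) mod (2 * h)).

Lemma heis_congr_sym p q : heis_congr p q -> heis_congr q p.
Proof.
  destruct p as [[i j] k], q as [[i' j'] k']. intros (P & Q & T & -> & -> & ->).
  exists (- P), (- Q), (- T). repeat split; ring.
Qed.

Lemma heis_congr_trans p q r : heis_congr p q -> heis_congr q r -> heis_congr p r.
Proof.
  destruct p as [[i j] k], q as [[i' j'] k'], r as [[i'' j''] k''].
  intros (P & Q & T & -> & -> & ->) (P' & Q' & T' & -> & -> & ->).
  exists (P + P'), (Q + Q'), (T + T'). repeat split; ring.
Qed.

Lemma heis_congr_mul p p' q q' :
  heis_congr p p' -> heis_congr q q' -> heis_congr (heis_mul p q) (heis_mul p' q').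
Proof.
  destruct p as [[i j] k], p' as [[i1 j1] k1], q as [[i' j'] k'], q' as [[i2 j2] k2].
  intros (P & Q & T & -> & -> & ->) (P' & Q' & T' & -> & -> & ->).
  exists (P + P'), (Q + Q'), (T + T' + i * Q' + P * j' + P * Q' * (2 * h)).
  repeat split; ring.
Qed.

Lemma heis_congr_inv p p' : heis_congr p p' -> heis_congr (heis_inv p) (heis_inv p').
Proof.
  destruct p as [[i j] k], p' as [[i1 j1] k1]. intros (P & Q & T & -> & -> & ->).
  exists (- P), (- Q), (- T + i * Q + P * j + P * Q * (2 * h)). repeat split; ring.
Qed.

Lemma heis_congr_nf p : heis_congr (heis_nf p) p.
Proof.
  destruct p as [[i j] k]. unfold heis_nf, heis_congr.
  exists (i / (2 * h)), (j / (2 * h)), ((k + (i / (2 * h) + j / (2 * h)) * h) / (2 * h)).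
  rewrite !(Z.mod_eq _ (2 * h)) by lia.
  repeat split; ring.
Qed.

Lemma heis_nf_congr p q : heis_congr p q -> heis_nf p = heis_nf q.
Proof.
  destruct p as [[i j] k], q as [[i' j'] k']. intros (P & Q & T & -> & -> & ->).
  unfold heis_nf. rewrite !Z_mod_plus_full, !Z.div_add by lia.
  replace (k - (P + Q) * h + T * (2 * h) + (i / (2 * h) + P + (j / (2 * h) + Q)) * h)
    with (k + (i / (2 * h) + j / (2 * h)) * h + T * (2 * h)) by ring.
  rewrite Z_mod_plus_full. reflexivity.
Qed.

Lemma heis_nf_eq p q : heis_nf p = heis_nf q <-> heis_congr p q.
Proof.
  split; [|apply heis_nf_congr]. intros E.
  apply (heis_congr_trans _ (heis_nf p)); [apply heis_congr_sym, heis_congr_nf|].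
  rewrite E. apply heis_congr_nf.
Qed.

Lemma heis_congr_refl p : heis_congr p p.
Proof. apply heis_nf_eq. reflexivity. Qed.

Lemma heis_nf_idem p : heis_nf (heis_nf p) = heis_nf p.
Proof. apply heis_nf_congr, heis_congr_nf. Qed.

Lemma heis_nf_mul_l p q : heis_nf (heis_mul (heis_nf p) q) = heis_nf (heis_mul p q).
Proof. apply heis_nf_congr, heis_congr_mul; [apply heis_congr_nf | apply heis_congr_refl]. Qed.

Lemma heis_nf_mul_r p q : heis_nf (heis_mul p (heis_nf q)) = heis_nf (heis_mul p q).
Proof. apply heis_nf_congr, heis_congr_mul; [apply heis_congr_refl | apply heis_congr_nf]. Qed.

Lemma heis_nf_inv p : heis_nf (heis_inv (heis_nf p)) = heis_nf (heis_inv p).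
Proof. apply heis_nf_congr, heis_congr_inv, heis_congr_nf. Qed.

Lemma heis_eq_dec (p q : heisenberg) : {p = q} + {p <> q}.
Proof. repeat decide equality; apply Z.eq_dec. Qed.

Definition heis_mod : group :=
  quotient_group heisenberg heis_nf heis_eq_dec heis_nf_idem
    heis_nf_mul_l heis_nf_mul_r heis_nf_inv.

Definition heis_class : heisenberg -> heis_mod := nf_class heisenberg heis_nf heis_nf_idem.

Lemma heis_class_hom : is_hom heis_class.
Proof. exact (nf_class_hom _ _ heis_eq_dec _ heis_nf_mul_l heis_nf_mul_r heis_nf_inv). Qed.

Lemma heis_class_eq p q : heis_class p = heis_class q <-> heis_congr p q.
Proof.
  rewrite <- heis_nf_eq. split.
  - intros E. exact (f_equal (@proj1_sig _ _) E).
  - intros E. apply normal_form_eq; [exact heis_eq_dec | exact E].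
Qed.

End HeisenbergQuotient.

Lemma Z_of_nat_pow2_succ (n : nat) : Z.of_nat (2 ^ S n) = 2 * Z.of_nat (2 ^ n).
Proof. rewrite Nat.pow_succ_r', Nat2Z.inj_mul. reflexivity. Qed.

Section HeisenbergModel.
Variable g : nat.
Let h := Z.of_nat (2 ^ g).

Lemma pow2_pos : 0 < h.
Proof. unfold h. pose proof (Nat.pow_nonzero 2 g). lia. Qed.

Let class := heis_class h pow2_pos.
Let class_hom : is_hom class := heis_class_hom h pow2_pos.
Let x := class (1, 0, 0).
Let y := class (0, 1, 0).

Lemma heis_mod_comm_xy : comm x y = class (0, 0, 1).
Proof. unfold x, y. rewrite <- (hom_comm class_hom). reflexivity. Qed.

Lemma heis_mod_rels : rels (S g) x y.
Proof.
  assert (E2 : Z.of_nat (2 ^ S g) = 2 * h) by apply Z_of_nat_pow2_succ.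
  assert (E4 : Z.of_nat (2 ^ (S g + 1)) = 4 * h)
    by (rewrite Nat.add_1_r, !Z_of_nat_pow2_succ; fold h; ring).
  unfold rels. rewrite heis_mod_comm_xy, Nat.sub_1_r. simpl Nat.pred.
  unfold x, y, class.
  rewrite <- !(hom_comm class_hom), <- !(hom_pow class_hom),
    <- (hom_one class_hom).
  (* [repeat split] closes the two relations [[x, y], x] = [[x, y], y] = 1, which hold in
     the Heisenberg group by computation. *)
  repeat split; apply heis_class_eq;
    rewrite ?heis_pow_xz, ?heis_pow_yz, ?E2, ?E4; fold h.
  - exists (-2), 0, (-1). repeat split; ring.
  - exists 0, (-2), (-1). repeat split; ring.
  - exists 0, 0, (-1). repeat split; ring.
  - exists (-1), 1, 0. repeat split; ring.
  - exists 0, (-1), 0. repeat split; ring.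
Qed.

Lemma heis_mod_pow_x_ne1 : gpow x (2 ^ S g) <> gone.
Proof.
  unfold x. rewrite <- (hom_pow class_hom), <- (hom_one class_hom).
  unfold class. rewrite heis_class_eq, heis_pow_xz, Z_of_nat_pow2_succ. fold h.
  intros (P & Q & T & EP & EQ & ET).
  assert (h_pos := pow2_pos).
  assert (P = -1) by nia. assert (Q = 0) by nia. subst P Q.
  assert (1 + 2 * T = 0) by nia. lia.
Qed.
End HeisenbergModel.

Close Scope Z_scope.

Lemma exists_rels_model (gam : nat) :
  0 < gam -> exists (H : group) (x y : H), rels gam x y /\ gpow x (2 ^ gam) <> gone.
Proof.
  destruct gam as [|g]; [lia|]. intros _.
  exists (heis_mod _ (pow2_pos g)), (heis_class _ (pow2_pos g) (1, 0, 0)%Z),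
    (heis_class _ (pow2_pos g) (0, 1, 0)%Z).
  exact (conj (heis_mod_rels g) (heis_mod_pow_x_ne1 g)).
Qed.

Theorem theorem4p1 (gam : nat) (hgam : 0 < gam) (G : group) (a b : G)
  (hG : presents gam G a b) : ~ capable G.
Proof.
  intros Hcap. destruct hG as (Hgen & Hrels & Huniv).
  destruct Hrels as (_ & _ & _ & _ & _ & Hab & _).
  assert (Ha : gpow a (2 ^ gam) = gone)
    by exact (capable_generated_pow_eq G a b _ _ Hcap Hgen Hab).
  destruct (exists_rels_model gam hgam) as (H & x & y & Hxy & Hx).
  destruct (Huniv H x y Hxy) as (phi & phi_hom & phi_a & _).
  apply Hx. rewrite <- phi_a, <- (hom_pow phi_hom), Ha. exact (hom_one phi_hom).
Qed.
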